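(* In the setting of the context: (a) If $\Pi^\rho_1 \ne \emptyset$, then the market admits $\rho$-arbitrage if and only if $\rho_1 \le 0$. (b) If $\Pi^\rho_1 = \emptyset$ and $\Pi^\rho_0 \ne \emptyset$, then the market admits $\rho$-arbitrage if and only if $\rho_1 < 0$. (c) If $\Pi^\rho_1 = \emptyset$ and $\Pi^\rho_0 = \emptyset$, then the market admits $\rho$-arbitrage.
   Context: Let $(\Omega,\mathcal{F},\mathbb{P})$ be a probability space. The market consists of a riskless asset with $S^0_0 = 1$, $S^0_1 = 1+r$, $r > -1$, and $d$ risky assets $S^1,\dots,S^d$ with constants $S^i_0 > 0$ and real-valued $\mathcal{F}$-measurable $S^i_1$. Returns: $R^i := (S^i_1 - S^i_0)/S^i_0$, $R=(R^1,\dots,R^d)$. Standing assumptions: nonredundancy (if $\theta\in\mathbb{R}^{1+d}$ and $\sum_{i=0}^d\theta^iS^i_t=0$ a.s. for $t\in\{0,1\}$ then $\theta=0$); $R^i\in L^1(\mathbb{P})$, $\mu^i:=\mathbb{E}[R^i]$; $\mu^i\neq r$ for some $i$. Portfolio $\pi\in\mathbb{R}^d$ has excess return $X_\pi:=\pi\cdot(R-r\mathbf{1})$; $\Pi_\nu := \{\pi : \mathbb{E}[X_\pi]=\nu\}$. $L$ is a Riesz space with $L^\infty\subset L\subset L^1$ containing all $X_\pi$, and $\rho:L\to(-\infty,\infty]$ is monotone, cash-invariant and positively homogeneous. $\rho_\nu:=\inf\{\rho(X_\pi):\pi\in\Pi_\nu\}\in[-\infty,\infty]$; $\Pi^\rho_\nu$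 is the set of $\pi\in\Pi_\nu$ with $\rho(X_\pi)<\infty$ and $\rho(X_\pi)\le\rho(X_{\pi'})$ for all $\pi'\in\Pi_\nu$. A portfolio $\pi$ is strictly $\rho$-preferred over $\pi'$ if $\mathbb{E}[X_\pi]\ge\mathbb{E}[X_{\pi'}]$ and $\rho(X_\pi)\le\rho(X_{\pi'})$ with at least one inequality strict. A portfolio $\pi$ is $\rho$-efficient if $\mathbb{E}[X_\pi]\ge0$ and no portfolio is strictly $\rho$-preferred over $\pi$. The market admits $\rho$-arbitrage if there are no $\rho$-efficient portfolios. *)

From HB Require Import structures.
From mathcomp Require Import all_boot all_order all_algebra.
From mathcomp Require Import all_classical all_reals all_analysis.
Set Implicit Arguments. Unset Strict Implicit. Unset Printing Implicit Defensive.
Import Order.TTheory GRing.Theory Num.Theory.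
Local Open Scope classical_set_scope.
Local Open Scope ring_scope.

Section OnePeriodMarket.
Context {R : realType} {d0 : measure_display} {T : measurableType d0}.
Variable (P : probability T R).
(* d risky assets; riskless rate r; S0 i = S^i_0 (constants), S1 i = S^i_1 *)
Variables (d : nat) (r : R) (S0 : 'I_d -> R) (S1 : 'I_d -> T -> R).

Definition ret (i : 'I_d) : T -> R := fun w => (S1 i w - S0 i) / S0 i.

Definition excess (pi : 'I_d -> R) : T -> R :=
  fun w => \sum_(i < d) pi i * (ret i w - r).

Definition expect (X : T -> R) : \bar R := (\int[P]_w (X w)%:E)%E.

Definition market_assumptions : Prop :=
  [/\ -1 < r /\ (forall i, 0 < S0 i),
      (forall i, measurable_fun setT (S1 i)),
      (* nonredundancy, with S^0_0 = 1, S^0_1 = 1 + r *)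
      (forall (th0 : R) (th : 'I_d -> R),
          th0 * 1 + \sum_(i < d) th i * S0 i = 0 ->
          {ae P, forall w, th0 * (1 + r) + \sum_(i < d) th i * S1 i w = 0} ->
          (th0 = 0 /\ (forall i, th i = 0))),
      (forall i, P.-integrable setT (fun w => (ret i w)%:E)) &
      (exists i, expect (ret i) != r%:E)].

Definition admissible_space (L : set (T -> R)) : Prop :=
  [/\ (forall f g, L f -> L g -> L (fun w => f w + g w)) /\
      (forall (a : R) f, L f -> L (fun w => a * f w)),
      (forall f g, L f -> L g -> L (fun w => Num.max (f w) (g w))),
      (forall f : T -> R, measurable_fun setT f ->
          (exists M : R, {ae P, forall w, `|f w| <= M}) -> L f),
      (forall f, L f -> P.-integrable setT (fun w => (f w)%:E)) &
      (forall pi, L (excess pi))].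

Definition risk_functional (L : set (T -> R)) (rho : (T -> R) -> \bar R) : Prop :=
  [/\ (forall X, L X -> rho X != -oo%E),
      (forall X Y, L X -> L Y -> {ae P, forall w, X w <= Y w} ->
          (rho Y <= rho X)%E),
      (forall X (c : R), L X -> rho (fun w => X w + c) = (rho X - c%:E)%E) &
      (forall X (lam : R), L X -> 0 < lam ->
          rho (fun w => lam * X w) = (lam%:E * rho X)%E)].

Variable rho : (T -> R) -> \bar R.

Definition Pi (nu : R) : set ('I_d -> R) := [set pi | expect (excess pi) = nu%:E].

Definition rho_opt (nu : R) : \bar R :=
  ereal_inf [set rho (excess pi) | pi in Pi nu].

Definition Pi_rho (nu : R) : set ('I_d -> R) :=
  [set pi | Pi nu pi /\ (rho (excess pi) < +oo)%E /\
            forall pi', Pi nu pi' -> (rho (excess pi) <= rho (excess pi'))%E].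

Definition strictly_preferred (pi pi' : 'I_d -> R) : Prop :=
  [/\ (expect (excess pi') <= expect (excess pi))%E,
      (rho (excess pi) <= rho (excess pi'))%E &
      ((expect (excess pi') < expect (excess pi))%E \/
       (rho (excess pi) < rho (excess pi'))%E)].

Definition rho_efficient (pi : 'I_d -> R) : Prop :=
  (0 <= expect (excess pi))%E /\ ~ exists pi', strictly_preferred pi' pi.

Definition rho_arbitrage : Prop := ~ exists pi, rho_efficient pi.

End OnePeriodMarket.

From HB Require Import structures.
From mathcomp Require Import all_boot all_order all_algebra.
From mathcomp Require Import all_classical all_reals all_analysis.
From mathcomp Require Import lra.
Set Implicit Arguments. Unset Strict Implicit. Unset Printing Implicit Defensive.
Import Order.TTheory GRing.Theory Num.Theory.
Local Open Scope classical_set_scope.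
Local Open Scope ring_scope.

(* Only two features of the market are used: the expected excess return is a
   nonzero linear functional of the portfolio, and rho is positively
   homogeneous and never -oo.
   Scaling by c > 0 therefore maps Pi^rho_nu onto Pi^rho_(c nu).  An efficient
   portfolio must have finite nonnegative risk and minimal risk among the
   portfolios of its own mean, so it lies in Pi^rho_0 or, after rescaling, in
   Pi^rho_1; this gives (c).  A mean-one portfolio of nonpositive risk, scaled
   beyond the mean of any candidate, strictly dominates it; this gives the
   "if" parts of (a) and (b).  Conversely a minimiser in Pi^rho_1 of positive
   risk x is efficient, since every portfolio of mean nu >= 1 has risk at least
   nu x; and a minimiser in Pi^rho_0 has risk 0 and is efficient as long as no
   mean-one portfolio has negative risk. *)

Section ExcessReturns.
Context {R : realType} {d0 : measure_display} {T : measurableType d0}.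
Variables (P : probability T R) (d : nat) (r : R) (S0 : 'I_d -> R)
  (S1 : 'I_d -> T -> R) (L : set (T -> R)) (rho : (T -> R) -> \bar R).
Hypotheses (adm : admissible_space P r S0 S1 L) (rf : risk_functional P L rho).

Local Notation excess := (excess r S0 S1).

Lemma excessZ (c : R) (pi : 'I_d -> R) :
  excess (c *: pi) = (fun w => c * excess pi w).
Proof.
apply: funext => w; rewrite /excess mulr_sumr.
by apply: eq_bigr => i _; rewrite mulrA.
Qed.

Lemma expect_excess_fin_num pi : expect P (excess pi) \is a fin_num.
Proof.
by have [_ _ _ Lint Lexcess] := adm; exact/integrable_fin_num/Lint/Lexcess.
Qed.

Lemma expect_excessZ (c : R) pi :
  expect P (excess (c *: pi)) = (c%:E * expect P (excess pi))%E.
Proof.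
have [_ _ _ Lint Lexcess] := adm; rewrite /expect excessZ.
under eq_integral => w _ do rewrite EFinM.
exact/integralZl/Lint.
Qed.

Lemma risk_excessZ (c : R) pi : 0 < c ->
  rho (excess (c *: pi)) = (c%:E * rho (excess pi))%E.
Proof.
move=> c_gt0; have [_ _ _ rhoZ] := rf.
by rewrite excessZ rhoZ //; case: adm.
Qed.

Lemma risk_excess_neqNy pi : rho (excess pi) != -oo%E.
Proof. by have [rho_neqNy _ _ _] := rf; apply: rho_neqNy; case: adm. Qed.

Lemma expect_excess_neq0 : market_assumptions P r S0 S1 ->
  exists pi, expect P (excess pi) != 0%E.
Proof.
move=> [_ _ _ ret_int [i0 mean_neq_r]].
pose e : 'I_d -> R := fun j => (j == i0)%:R.
have excess_e : excess e = (fun w => ret S0 S1 i0 w - r).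
  apply: funext => w; rewrite /excess (bigD1 i0) //= big1 ?addr0.
    by rewrite /e eqxx mul1r.
  by move=> j /negPf ji0; rewrite /e ji0 mul0r.
have [a mean_a] : exists a, expect P (ret S0 S1 i0) = a%:E.
  exists (fine (expect P (ret S0 S1 i0))).
  by rewrite fineK //; exact: integrable_fin_num.
exists e; rewrite /expect excess_e.
under eq_integral => w _ do rewrite EFinB.
rewrite (integralB_EFin (f1 := ret S0 S1 i0) (f2 := cst r)) //; last 2 first.
- exact: ret_int.
- exact: finite_measure_integrable_cst.
rewrite -/(expect P (ret S0 S1 i0)) mean_a.
have -> : (\int[P]_w (cst r w)%:E = r%:E)%E.
  rewrite -[X in integral _ _ X]/(cst r%:E) integral_cst // -[RHS]mule1.
  by congr (_ * _)%E; exact: probability_setT.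
rewrite -EFinB eqe subr_eq0; apply: contra mean_neq_r => /eqP a_r.
by rewrite mean_a a_r.
Qed.

End ExcessReturns.

Section EfficientPortfolios.
Context {R : realType} {d0 : measure_display} {T : measurableType d0}.
Variables (P : probability T R) (d : nat) (r : R) (S0 : 'I_d -> R)
  (S1 : 'I_d -> T -> R) (rho : (T -> R) -> \bar R).

Local Notation mean pi := (expect P (excess r S0 S1 pi)).
Local Notation risk pi := (rho (excess r S0 S1 pi)).
Local Notation Pi := (Pi P r S0 S1).
Local Notation rho_opt := (rho_opt P r S0 S1 rho).
Local Notation Pi_rho := (Pi_rho P r S0 S1 rho).
Local Notation strictly_preferred := (strictly_preferred P r S0 S1 rho).
Local Notation rho_efficient := (rho_efficient P r S0 S1 rho).
Local Notation rho_arbitrage := (rho_arbitrage P r S0 S1 rho).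

Lemma PiE nu pi : Pi nu pi <-> mean pi = nu%:E.
Proof. by []. Qed.

Lemma rho_opt_le nu pi : Pi nu pi -> (rho_opt nu <= risk pi)%E.
Proof.
by move=> Pi_pi; apply: ge_ereal_inf; exists (risk pi) => //; exists pi.
Qed.

Lemma Pi_rho_rho_opt nu pi : Pi_rho nu pi -> rho_opt nu = risk pi.
Proof.
move=> [Pi_pi [_ min_pi]]; apply/eqP; rewrite eq_le rho_opt_le //=.
by apply/ereal_infP => _ [p Pi_p <-]; exact: min_pi.
Qed.

Lemma Pi_rho_of_le_rho_opt nu pi : Pi nu pi -> (risk pi < +oo)%E ->
  (risk pi <= rho_opt nu)%E -> Pi_rho nu pi.
Proof.
move=> Pi_pi risk_lty le_opt; split=> //; split=> // p Pi_p.
exact: le_trans le_opt (rho_opt_le Pi_p).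
Qed.

Lemma preferred_of_mean_gt pi pi' : (mean pi < mean pi')%E ->
  (risk pi' <= risk pi)%E -> strictly_preferred pi' pi.
Proof. by move=> mean_lt risk_le; split; [exact: ltW | | left]. Qed.

Lemma preferred_of_risk_lt pi pi' : (mean pi <= mean pi')%E ->
  (risk pi' < risk pi)%E -> strictly_preferred pi' pi.
Proof. by move=> mean_le risk_lt; split; [| exact: ltW | right]. Qed.

Hypothesis mean_fin_num : forall pi, mean pi \is a fin_num.
Hypothesis meanZ : forall (c : R) pi, mean (c *: pi) = (c%:E * mean pi)%E.
Hypothesis riskZ :
  forall (c : R) pi, 0 < c -> risk (c *: pi) = (c%:E * risk pi)%E.
Hypothesis risk_neqNy : forall pi, risk pi != -oo%E.
Hypothesis mean_neq0 : exists pi, mean pi != 0%E.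

Lemma risk_fin_num pi : (risk pi < +oo)%E -> risk pi \is a fin_num.
Proof. by move=> risk_lty; rewrite fin_numE risk_neqNy lt_eqF. Qed.

Lemma unit_mean_exists : exists q, mean q = 1%:E.
Proof.
have [pi mean_pi] := mean_neq0; exists ((fine (mean pi))^-1 *: pi).
rewrite meanZ -{2}(fineK (mean_fin_num pi)) -EFinM mulVf //.
by apply: contra mean_pi => /eqP m0; rewrite -(fineK (mean_fin_num pi)) m0.
Qed.

Lemma mean_lt_scale_unit q pi : mean q = 1%:E ->
  (mean pi < mean ((fine (mean pi) + 1) *: q))%E.
Proof.
move=> q1; rewrite meanZ q1 mule1 -{1}(fineK (mean_fin_num pi)).
by rewrite lte_fin ltrDl.
Qed.

Lemma efficient_risk_ge0 pi : rho_efficient pi -> (0 <= risk pi)%E.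
Proof.
move=> [mean_ge0 not_dominated]; rewrite leNgt; apply/negP => risk_lt0.
apply: not_dominated; exists (2 *: pi); apply: preferred_of_risk_lt.
  rewrite meanZ -(fineK (mean_fin_num pi)) -EFinM lee_fin.
  by move: mean_ge0; rewrite -(fineK (mean_fin_num pi)) lee_fin; lra.
rewrite riskZ //; move: risk_lt0 (risk_neqNy pi).
by case: (risk pi) => [x| |] //; rewrite -EFinM !lte_fin; lra.
Qed.

Lemma efficient_risk_lty pi : rho_efficient pi -> (risk pi < +oo)%E.
Proof.
move=> [_ not_dominated]; rewrite ltey; apply/negP => /eqP risk_y.
have [q q1] := unit_mean_exists.
apply: not_dominated; exists ((fine (mean pi) + 1) *: q).
apply: preferred_of_mean_gt; first exact: mean_lt_scale_unit.
by rewrite risk_y leey.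
Qed.

Lemma rho_arbitrage_of_unit_mean q : mean q = 1%:E -> (risk q <= 0)%E ->
  rho_arbitrage.
Proof.
move=> q1 risk_q_le0 [pi eff]; have risk_ge0 := efficient_risk_ge0 eff.
case: eff => mean_ge0 not_dominated.
have c_gt0 : 0 < fine (mean pi) + 1.
  by move: mean_ge0; rewrite -(fineK (mean_fin_num pi)) lee_fin; lra.
apply: not_dominated; exists ((fine (mean pi) + 1) *: q).
apply: preferred_of_mean_gt; first exact: mean_lt_scale_unit.
rewrite riskZ //; apply: le_trans risk_ge0.
by apply: mule_ge0_le0; rewrite // lee_fin ltW.
Qed.

Lemma efficient_Pi_rho pi : rho_efficient pi -> Pi_rho (fine (mean pi)) pi.
Proof.
move=> eff; split; first by apply/PiE; rewrite fineK.
split; first exact: efficient_risk_lty.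
move=> p mean_p; rewrite leNgt; apply/negP => risk_lt; case: eff => _; apply.
by exists p; apply: preferred_of_risk_lt => //; rewrite mean_p fineK.
Qed.

Lemma Pi_rhoZ (c nu : R) pi :
  0 < c -> Pi_rho nu pi -> Pi_rho (c * nu) (c *: pi).
Proof.
move=> c_gt0 [mean_pi [risk_lty min_pi]]; split; [|split].
- by apply/PiE; rewrite meanZ mean_pi -EFinM.
- by rewrite riskZ // -(fineK (risk_fin_num risk_lty)) -EFinM ltry.
- move=> p mean_p.
  have le_p : (risk pi <= risk (c^-1 *: p))%E.
    by apply: min_pi; apply/PiE; rewrite meanZ mean_p -EFinM mulKf ?gt_eqF.
  rewrite -(scalerKV (lt0r_neq0 c_gt0) p) riskZ // riskZ //.
  by apply: lee_wpmul2l; rewrite // lee_fin ltW.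
Qed.

Lemma Pi_rho0_risk p0 : Pi_rho 0 p0 -> risk p0 = 0%E.
Proof.
move=> opt0; have := Pi_rhoZ (ltr0n _ 2) opt0; rewrite mulr0 => opt0'.
have := Pi_rho_rho_opt opt0'; rewrite (Pi_rho_rho_opt opt0) riskZ //.
have [_ [risk_lty _]] := opt0; rewrite -(fineK (risk_fin_num risk_lty)) -EFinM.
by move=> /eqP; rewrite eqe => /eqP x_2x; congr EFin; lra.
Qed.

Lemma Pi_rho1_efficient p1 : Pi_rho 1 p1 -> (0 < risk p1)%E -> rho_efficient p1.
Proof.
move=> opt1 risk_gt0; have [/PiE mean1 [risk_lty _]] := opt1.
split; first by rewrite mean1 lee_fin ler01.
move=> [p [mean_le risk_le strict]].
have mean_p := fineK (mean_fin_num p); set nu := fine (mean p) in mean_p.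
have nu_ge1 : 1 <= nu by move: mean_le; rewrite mean1 -mean_p lee_fin.
have nu_gt0 : 0 < nu := lt_le_trans ltr01 nu_ge1.
have [_ [_ min_nu]] := Pi_rhoZ nu_gt0 opt1.
have := min_nu p; rewrite mulr1 riskZ // => /(_ (esym mean_p)) risk_ge.
have fin_p1 := risk_fin_num risk_lty.
have fin_p := risk_fin_num (le_lt_trans risk_le risk_lty).
move: risk_gt0 risk_le strict risk_ge; rewrite mean1 -mean_p.
rewrite -(fineK fin_p1) -(fineK fin_p) -EFinM !lte_fin !lee_fin.
set x := fine (risk p1); set y := fine (risk p).
move=> x_gt0 y_le_x [nu_gt1|y_lt_x] nux_le_y.
  by have := le_trans nux_le_y y_le_x; rewrite ger_pMl // leNgt nu_gt1.
have x_le_nux : x <= nu * x by rewrite ler_pMl.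
by have := lt_le_trans y_lt_x (le_trans x_le_nux nux_le_y); rewrite ltxx.
Qed.

Lemma Pi_rho0_efficient p0 : Pi_rho 1 = set0 -> (0 <= rho_opt 1)%E ->
  Pi_rho 0 p0 -> rho_efficient p0.
Proof.
move=> no_opt1 opt1_ge0 opt0; have risk0 := Pi_rho0_risk opt0.
have [mean0 [_ min0]] := opt0.
split; first by rewrite mean0.
move=> [p [mean_le risk_le strict]]; rewrite risk0 in risk_le strict.
have mean_p := fineK (mean_fin_num p); set nu := fine (mean p) in mean_p.
have : 0 <= nu by move: mean_le; rewrite mean0 -mean_p lee_fin.
rewrite le_eqVlt => /orP[/eqP nu0|nu_gt0].
  have risk_ge0 : (0 <= risk p)%E.
    by rewrite -risk0; apply: min0; apply/PiE; rewrite -mean_p -nu0.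
  case: strict => [|risk_lt0]; first by rewrite mean0 -mean_p -nu0 ltxx.
  by have := lt_le_trans risk_lt0 risk_ge0; rewrite ltxx.
suff : Pi_rho 1 (nu^-1 *: p) by rewrite no_opt1.
have risk_le0 : (risk (nu^-1 *: p) <= 0)%E.
  rewrite riskZ ?invr_gt0 //.
  by apply: mule_ge0_le0; rewrite // lee_fin invr_ge0 ltW.
apply: Pi_rho_of_le_rho_opt; last exact: le_trans opt1_ge0.
  by apply/PiE; rewrite meanZ -mean_p -EFinM mulVf ?gt_eqF.
exact: le_lt_trans risk_le0 (ltry _).
Qed.

Lemma rho_arbitrage_of_Pi_rho_empty : Pi_rho 1 = set0 -> Pi_rho 0 = set0 ->
  rho_arbitrage.
Proof.
move=> no_opt1 no_opt0 [pi eff]; have opt := efficient_Pi_rho eff.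
have : 0 <= fine (mean pi) by rewrite -lee_fin fineK //; case: eff.
rewrite le_eqVlt => /orP[/eqP m0|m_gt0].
  by move: opt; rewrite -m0 no_opt0.
have inv_gt0 : 0 < (fine (mean pi))^-1 by rewrite invr_gt0.
by have := Pi_rhoZ inv_gt0 opt; rewrite mulVf ?gt_eqF // no_opt1.
Qed.

End EfficientPortfolios.

Theorem theorem3p20 (R : realType) (d0 : measure_display) (T : measurableType d0)
  (P : probability T R) (d : nat) (r : R) (S0 : 'I_d -> R) (S1 : 'I_d -> T -> R)
  (L : set (T -> R)) (rho : (T -> R) -> \bar R) :
  market_assumptions P r S0 S1 ->
  admissible_space P r S0 S1 L ->
  risk_functional P L rho ->
  [/\ (Pi_rho P r S0 S1 rho 1 !=set0 ->
         (rho_arbitrage P r S0 S1 rho <-> (rho_opt P r S0 S1 rho 1 <= 0)%E)),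
      (Pi_rho P r S0 S1 rho 1 = set0 -> Pi_rho P r S0 S1 rho 0 !=set0 ->
         (rho_arbitrage P r S0 S1 rho <-> (rho_opt P r S0 S1 rho 1 < 0)%E)) &
      (Pi_rho P r S0 S1 rho 1 = set0 -> Pi_rho P r S0 S1 rho 0 = set0 ->
         rho_arbitrage P r S0 S1 rho)].
Proof.
move=> mkt adm rf.
have mean_fin_num := expect_excess_fin_num adm.
have meanZ := expect_excessZ adm.
have riskZ := risk_excessZ adm rf.
have risk_neqNy := risk_excess_neqNy adm rf.
have mean_neq0 := expect_excess_neq0 mkt.
split.
- move=> [p1 opt1]; rewrite (Pi_rho_rho_opt opt1); split=> [arb|].
    rewrite leNgt; apply/negP => risk_gt0; apply: arb.
    by exists p1; exact: Pi_rho1_efficient.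
  by case: opt1 => mean1 _; exact: rho_arbitrage_of_unit_mean.
- move=> no_opt1 [p0 opt0]; split=> [arb|].
    rewrite ltNge; apply/negP => opt1_ge0; apply: arb.
    by exists p0; exact: Pi_rho0_efficient.
  by move=> /ereal_inf_lt[_ [q q1 <-] /ltW]; exact: rho_arbitrage_of_unit_mean.
- exact: rho_arbitrage_of_Pi_rho_empty.
Qed.
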